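(* Let $K$ be a ramified quadratic extension of $\mathbb{Q}_2$ with ring of integers $\mathcal{O}$ and uniformizer $\pi$ as specified in the context, and let $d=2m$ with $m$ odd, $m\ge3$. Let $r\ge 0$ be an integer. (1) If $a_1=\pi^r u_1$, $a_2=\pi^r u_2$ with $u_1,u_2$ units whose $\pi$-coefficients differ, then for each $e\in\{0,1\}$ there exist units $b_1,b_2\in\mathcal{O}$ with $a_1b_1^d+a_2b_2^d=\pi^{r+1}w$, where $w$ is a unit with $\pi$-coefficient $e$. (2) If $a_1=\pi^r u_1$, $a_2=\pi^r u_2$ with $u_1,u_2$ units having the same $\pi$-coefficient, then there exist units $b_1,b_2\in\mathcal{O}$ with $\mathrm{ord}_\pi(a_1b_1^d+a_2b_2^d)=r+2$. (3) Under the hypothesis of (2), there exist units $b_1,b_2\in\mathcal{O}$ with $\mathrm{ord}_\pi(a_1b_1^d+a_2b_2^d)\ge r+3$ (where $\mathrm{ord}_\pi(0)=\infty$). (4) Suppose $K\in\{\mathbb{Q}_2(\sqrt{-1}),\mathbb{Q}_2(\sqrt{-5})\}$. If $a_1,a_2,a_3$ are of the form $a_i=\pi^r u_i$ with units $u_i$ all having the same $\pi$-coefficient, then there are indices $i\neq j$ in $\{1,2,3\}$ and units $b_i,b_j\in\mathcal{O}$ with $\mathrm{ord}_\pi(a_ib_i^d+a_jb_j^d)\ge r+4$. (5) Suppose $K\in\{\mathbb{Q}_2(\sqrt{2}),\mathbb{Q}_2(\sqrt{10}),\mathbb{Q}_2(\sqrt{-2}),\mathbb{Q}_2(\sqrt{-10})\}$.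 If $a_1,a_2,a_3$ are of the form $a_i=\pi^r u_i$ with units $u_i$ all having the same $\pi$-coefficient $c$, then there are indices $i\neq j$ in $\{1,2,3\}$ and units $b_i,b_j\in\mathcal{O}$ with $a_ib_i^d+a_jb_j^d=\pi^{r+2}w$, where $w$ is a unit whose $\pi$-coefficient is $c$.
   Context: $K$ is one of the six ramified quadratic extensions of $\mathbb{Q}_2$, with uniformizer $\pi$ chosen as follows: $\pi=\sqrt{2}$ for $\mathbb{Q}_2(\sqrt2)$, $\pi=\sqrt{-2}$ for $\mathbb{Q}_2(\sqrt{-2})$, $\pi=\sqrt{10}$ for $\mathbb{Q}_2(\sqrt{10})$, $\pi=\sqrt{-10}$ for $\mathbb{Q}_2(\sqrt{-10})$, $\pi=1+\sqrt{-1}$ for $\mathbb{Q}_2(\sqrt{-1})$, $\pi=1+\sqrt{-5}$ for $\mathbb{Q}_2(\sqrt{-5})$. Every unit $u\in\mathcal{O}$ has a unique expansion $u=c_0+c_1\pi+c_2\pi^2+\cdots$ with all $c_k\in\{0,1\}$ and $c_0=1$; $c_1$ is called the $\pi$-coefficient of $u$. *)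

(* Concrete model of the ring of integers O of the six
   ramified quadratic extensions K = Q_2(sqrt D) of Q_2.  In all six cases
   D = 2,-2,10,-10,-1,-5 one has O = Z_2[sqrt D], and we realise
   O = lim_n Z[sqrt D] / 2^n Z[sqrt D]  as coherent sequences of
   pairs (a_n, b_n) of integers, (a_n, b_n) standing for a_n + b_n sqrt D
   modulo 2^n. *)
From mathcomp Require Import all_boot all_order all_algebra.
Set Implicit Arguments. Unset Strict Implicit. Unset Printing Implicit Defensive.
Import GRing.Theory Num.Theory.
Local Open Scope ring_scope.

Inductive ramK := Q2sqrt2 | Q2sqrtm2 | Q2sqrt10 | Q2sqrtm10 | Q2sqrtm1 | Q2sqrtm5.

Definition radicand (K : ramK) : int :=
  match K with
  | Q2sqrt2 => 2 | Q2sqrtm2 => -2 | Q2sqrt10 => 10 | Q2sqrtm10 => -10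
  | Q2sqrtm1 => -1 | Q2sqrtm5 => -5
  end.

Definition Oseq := nat -> (int * int)%type.

Definition congr2 (n : nat) (x y : int * int) : Prop :=
  (x.1 = y.1 %[mod (2 ^+ n : int)])%Z /\ (x.2 = y.2 %[mod (2 ^+ n : int)])%Z.

Definition isO (x : Oseq) : Prop := forall n, congr2 n (x n.+1) (x n).

Definition eqO (x y : Oseq) : Prop := forall n, congr2 n (x n) (y n).

Definition constO (a b : int) : Oseq := fun _ => (a, b).
Definition zeroO : Oseq := constO 0 0.
Definition oneO : Oseq := constO 1 0.
Definition addO (x y : Oseq) : Oseq := fun n => ((x n).1 + (y n).1, (x n).2 + (y n).2).
Definition oppO (x : Oseq) : Oseq := fun n => (- (x n).1, - (x n).2).
Definition subO (x y : Oseq) : Oseq := addO x (oppO y).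
Definition mulO (K : ramK) (x y : Oseq) : Oseq := fun n =>
  ((x n).1 * (y n).1 + radicand K * ((x n).2 * (y n).2),
   (x n).1 * (y n).2 + (x n).2 * (y n).1).
Definition expO (K : ramK) (x : Oseq) (k : nat) : Oseq := iter k (mulO K x) oneO.

Definition piO (K : ramK) : Oseq :=
  match K with
  | Q2sqrtm1 | Q2sqrtm5 => constO 1 1
  | _ => constO 0 1
  end.

Definition unitO (K : ramK) (u : Oseq) : Prop :=
  isO u /\ exists v, isO v /\ eqO (mulO K u v) oneO.

(* pi^k divides x in O, i.e. ord_pi x >= k (ord_pi 0 = infinity) *)
Definition ord_ge (K : ramK) (x : Oseq) (k : nat) : Prop :=
  exists y, isO y /\ eqO x (mulO K (expO K (piO K) k) y).

Definition ord_eq (K : ramK) (x : Oseq) (k : nat) : Prop :=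
  ord_ge K x k /\ ~ ord_ge K x k.+1.

Definition digitO (c : bool) : Oseq := if c then oneO else zeroO.

Definition psumO (K : ramK) (c : nat -> bool) (N : nat) : Oseq :=
  foldr (fun k acc => addO (mulO K (digitO (c k)) (expO K (piO K) k)) acc)
        zeroO (iota 0 N).

(* u = c_0 + c_1 pi + c_2 pi^2 + ... with c_k in {0,1}, c_0 = 1, and
   c_1 = e :  e is the pi-coefficient of the unit u *)
Definition pi_coeff (K : ramK) (u : Oseq) (e : bool) : Prop :=
  exists c : nat -> bool, c 0%N = true /\ c 1%N = e /\
    forall N, ord_ge K (subO u (psumO K c N)) N.

Definition binform (K : ramK) (d : nat) (a1 b1 a2 b2 : Oseq) : Oseq :=
  addO (mulO K a1 (expO K b1 d)) (mulO K a2 (expO K b2 d)).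

(* O is Z_2[sqrt D], and pi * conj pi = 2 t with t odd.  Hence pi ^ s divides x iff
   2 ^ s divides the coordinates of conj pi ^ s * x, an element is a unit iff its norm
   is odd, and every element has a pi-adic expansion, its digits being read off from
   the parity of norms.
   The units b used below (1 and sqrt D, or 1 and 1 + sqrt D) satisfy b ^ 4 = 1 mod 4;
   as d = 2 m with m odd, b ^ d = b ^ 2 mod 4, and pi ^ 4 divides 4.  So modulo
   pi ^ (r + 4) the form a_1 b_1 ^ d + a_2 b_2 ^ d only depends on b_1 ^ 2, b_2 ^ 2 and
   on the first four pi-adic digits of u_1, u_2, and each claim becomes a finite check
   in Z[sqrt D] done by computation. *)

From Pilot Require Import Defs.
From HB Require Import structures.
From mathcomp Require Import all_boot all_order all_algebra.
From mathcomp Require Import ring zify.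
Set Implicit Arguments. Unset Strict Implicit. Unset Printing Implicit Defensive.
Import GRing.Theory Num.Theory.
Local Open Scope ring_scope.

Definition zsqrt (K : ramK) := (int * int)%type.
HB.instance Definition _ (K : ramK) := Choice.copy (zsqrt K) (int * int)%type.

Section ZsqrtRing.
Variable K : ramK.
Local Notation D := (radicand K).

Definition zsqrt_add (x y : zsqrt K) : zsqrt K := (x.1 + y.1, x.2 + y.2).
Definition zsqrt_opp (x : zsqrt K) : zsqrt K := (- x.1, - x.2).
Definition zsqrt_mul (x y : zsqrt K) : zsqrt K :=
  (x.1 * y.1 + D * (x.2 * y.2), x.1 * y.2 + x.2 * y.1).

Lemma zsqrt_addA : associative zsqrt_add.
Proof. by move=> [a b] [c d] [e f]; congr pair; rewrite /= addrA. Qed.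
Lemma zsqrt_addC : commutative zsqrt_add.
Proof. by move=> [a b] [c d]; congr pair; rewrite /= addrC. Qed.
Lemma zsqrt_add0 : left_id (0, 0) zsqrt_add.
Proof. by move=> [a b]; congr pair; rewrite /= add0r. Qed.
Lemma zsqrt_addN : left_inverse (0, 0) zsqrt_opp zsqrt_add.
Proof. by move=> [a b]; congr pair; rewrite /= addNr. Qed.
HB.instance Definition _ :=
  GRing.isZmodule.Build (zsqrt K) zsqrt_addA zsqrt_addC zsqrt_add0 zsqrt_addN.

Lemma zsqrt_mulA : associative zsqrt_mul.
Proof. by move=> [a b] [c d] [e f]; congr pair; rewrite /=; ring. Qed.
Lemma zsqrt_mulC : commutative zsqrt_mul.
Proof. by move=> [a b] [c d]; congr pair; rewrite /=; ring. Qed.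
Lemma zsqrt_mul1 : left_id (1, 0) zsqrt_mul.
Proof. by move=> [a b]; congr pair; rewrite /=; ring. Qed.
Lemma zsqrt_mulDl : left_distributive zsqrt_mul zsqrt_add.
Proof. by move=> [a b] [c d] [e f]; congr pair; rewrite /=; ring. Qed.
Lemma zsqrt_nonzero1 : ((1, 0) : zsqrt K) != 0. Proof. by []. Qed.
HB.instance Definition _ := GRing.Zmodule_isComNzRing.Build (zsqrt K)
  zsqrt_mulA zsqrt_mulC zsqrt_mul1 zsqrt_mulDl zsqrt_nonzero1.

Lemma zsqrt_mulE (x y : zsqrt K) :
  x * y = (x.1 * y.1 + D * (x.2 * y.2), x.1 * y.2 + x.2 * y.1).
Proof. by []. Qed.

Lemma zsqrt_intrE (c : int) : (c%:~R : zsqrt K) = (c, 0).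
Proof.
have natE n : (n%:R : zsqrt K) = (n%:Z, 0).
  by elim: n => // n IH; rewrite mulrS IH; congr pair; rewrite /= ?addr0 // intS.
case: c => n; first by rewrite -pmulrn natE.
by rewrite NegzE mulrNz -pmulrn natE; congr pair; rewrite /= oppr0.
Qed.

Lemma zsqrt_intrM (c : int) (z : zsqrt K) : c%:~R * z = (c * z.1, c * z.2).
Proof. by case: z => a b; rewrite zsqrt_intrE zsqrt_mulE; congr pair; rewrite /=; ring. Qed.

Definition conjz (z : zsqrt K) : zsqrt K := (z.1, - z.2).
Definition normz (z : zsqrt K) : int := z.1 ^+ 2 - D * z.2 ^+ 2.

Lemma mul_conjz z : z * conjz z = (normz z)%:~R.
Proof. by case: z => a b; rewrite zsqrt_intrE zsqrt_mulE /normz; congr pair; rewrite /=; ring. Qed.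

Lemma normzM : {morph normz : x y / x * y >-> x * y}.
Proof. by move=> [a b] [c d]; rewrite zsqrt_mulE /normz /=; ring. Qed.

Lemma normzD x y :
  normz (x + y) = normz x + normz y + 2 * (x.1 * y.1 - D * (x.2 * y.2)).
Proof. by case: x y => a b [c d]; rewrite /normz /=; ring. Qed.

Lemma normz_intr (c : int) : normz c%:~R = c ^+ 2.
Proof. by rewrite zsqrt_intrE /normz /=; ring. Qed.

End ZsqrtRing.

Section Dvd2.
Variable K : ramK.

Definition dvd2 n (z : zsqrt K) : bool := (2 ^+ n %| z.1)%Z && (2 ^+ n %| z.2)%Z.

Lemma dvd2n0 n : dvd2 n 0. Proof. by rewrite /dvd2 !dvdz0. Qed.

Lemma dvd2D n x y : dvd2 n x -> dvd2 n y -> dvd2 n (x + y).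
Proof. by case/andP=> x1 x2 /andP[y1 y2]; rewrite /dvd2 !rpredD. Qed.

Lemma dvd2N n x : dvd2 n x -> dvd2 n (- x).
Proof. by case/andP=> x1 x2; rewrite /dvd2 !rpredN x1. Qed.

Lemma dvd2B n x y : dvd2 n x -> dvd2 n y -> dvd2 n (x - y).
Proof. by move=> dx dy; rewrite dvd2D ?dvd2N. Qed.

Lemma dvd2Mr n x y : dvd2 n x -> dvd2 n (x * y).
Proof.
case/andP=> x1 x2; rewrite /dvd2 zsqrt_mulE /=.
apply/andP; split; apply: rpredD; try exact: dvdz_mulr.
by apply: dvdz_mull; apply: dvdz_mulr.
Qed.

Lemma dvd2Ml n x y : dvd2 n y -> dvd2 n (x * y).
Proof. by rewrite mulrC; apply: dvd2Mr. Qed.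

Lemma dvd2_leq m n z : (m <= n)%N -> dvd2 n z -> dvd2 m z.
Proof.
move=> /(dvdz_exp2l 2) mn /andP[z1 z2].
by rewrite /dvd2 (dvdz_trans mn z1) (dvdz_trans mn z2).
Qed.

Lemma dvd2_mul2l k n z : dvd2 (k + n) ((2 ^+ k)%:~R * z) = dvd2 n z.
Proof.
have k2_neq0 : (2 ^+ k : int) != 0 by rewrite expf_neq0.
by rewrite zsqrt_intrM /dvd2 exprD !dvdz_mul2l.
Qed.

Lemma dvd2_normz z : dvd2 1 z -> (2 %| normz z)%Z.
Proof.
case/andP; rewrite /normz expr1 => z1 z2.
by rewrite rpredB // ?dvdz_mull // exprS dvdz_mulr.
Qed.

Lemma normz_congr2 x y : dvd2 1 (x - y) -> (2 %| normz x - normz y)%Z.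
Proof.
case: x y => a b [c d]; rewrite /dvd2 /normz /= expr1 => /andP[ac bd].
have -> : a ^+ 2 - radicand K * b ^+ 2 - (c ^+ 2 - radicand K * d ^+ 2) =
  (a - c) * (a + c) - radicand K * ((b - d) * (b + d)) by ring.
by apply: rpredB; [apply: dvdz_mulr | apply/dvdz_mull/dvdz_mulr].
Qed.

Lemma dvd2_odd_intrM (c : int) z : ~~ (2 %| c)%Z -> dvd2 1 (c%:~R * z) = dvd2 1 z.
Proof.
rewrite zsqrt_intrM /dvd2 /= expr1 dvdzE => c_odd.
by rewrite !dvdzE !abszM !Euclid_dvdM // (negPf c_odd).
Qed.

Lemma congr2E n (x y : zsqrt K) : Defs.congr2 n x y <-> dvd2 n (x - y).
Proof.
rewrite /Defs.congr2 /dvd2 -!eqz_mod_dvd.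
by split=> [[-> ->]|/andP[/eqP ? /eqP ?]]; rewrite ?eqxx.
Qed.

End Dvd2.

Lemma odd_exp2_congr1 (a : int) k : ~~ (2 %| a)%Z -> (2 ^+ k.+1 %| a ^+ (2 ^ k) - 1)%Z.
Proof.
move=> a_odd; elim: k => [|k IH]; first by rewrite expr1 expn0 expr1; lia.
rewrite expnS mulnC exprM.
have -> : (a ^+ (2 ^ k)) ^+ 2 - 1 = (a ^+ (2 ^ k) - 1) * (a ^+ (2 ^ k) + 1) by ring.
rewrite exprS mulrC dvdz_mul //.
have : (2 %| a ^+ (2 ^ k) - 1)%Z by exact: dvdz_trans (dvdz_exp2l 2 (isT : (1 <= k.+1)%N)) IH.
by move: (a ^+ _) => b; lia.
Qed.

Section Levels.
Variable K : ramK.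

Definition lev (x : Oseq) n : zsqrt K := x n.
Definition cO (z : zsqrt K) : Oseq := constO z.1 z.2.

Lemma lev_add x y n : lev (addO x y) n = lev x n + lev y n. Proof. by []. Qed.
Lemma lev_opp x n : lev (oppO x) n = - lev x n. Proof. by []. Qed.
Lemma lev_sub x y n : lev (subO x y) n = lev x n - lev y n. Proof. by []. Qed.
Lemma lev_mul x y n : lev (mulO K x y) n = lev x n * lev y n. Proof. by []. Qed.
Lemma lev_exp x k n : lev (expO K x k) n = lev x n ^+ k.
Proof. by elim: k => // k IH; rewrite exprS -IH. Qed.
Lemma lev_one n : lev oneO n = 1. Proof. by []. Qed.
Lemma lev_zero n : lev zeroO n = 0. Proof. by []. Qed.
Lemma lev_cO z n : lev (cO z) n = z. Proof. by case: z. Qed.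
Lemma lev_digit c n : lev (digitO c) n = c%:R. Proof. by case: c. Qed.

Definition levE :=
  (lev_add, lev_opp, lev_sub, lev_mul, lev_exp, lev_one, lev_zero, lev_cO, lev_digit).

Lemma eqOE x y : eqO x y <-> forall n, dvd2 n (lev x n - lev y n).
Proof. by split=> xy n; apply/congr2E; apply: xy. Qed.

Lemma isOE x : isO x <-> forall n, dvd2 n (lev x n.+1 - lev x n).
Proof. by split=> xO n; apply/congr2E; apply: xO. Qed.

Lemma eqO_lev x y : (forall n, lev x n = lev y n) -> eqO x y.
Proof. by move=> xy; apply/eqOE => n; rewrite xy subrr dvd2n0. Qed.

Lemma isO_dvd2 x m n : isO x -> (m <= n)%N -> dvd2 m (lev x n - lev x m).
Proof.
move/isOE=> xO; elim: n => [|n IH]; first by rewrite leqn0 => /eqP ->; rewrite subrr dvd2n0.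
rewrite leq_eqVlt ltnS => /orP[/eqP <-|mn]; first by rewrite subrr dvd2n0.
rewrite -(subrK (lev x n) (lev x n.+1)) -addrA dvd2D ?IH //.
exact: dvd2_leq (xO n).
Qed.

Lemma isO_mul x y : isO x -> isO y -> isO (mulO K x y).
Proof.
move=> /isOE xO /isOE yO; apply/isOE => n; rewrite !levE.
have -> : forall a b c d : zsqrt K, a * b - c * d = (a - c) * b + c * (b - d)
  by move=> *; ring.
by apply: dvd2D; [apply: dvd2Mr | apply: dvd2Ml].
Qed.

End Levels.
Arguments eqOE : clear implicits.
Arguments isOE : clear implicits.
Arguments eqO_lev K {x y}.

Lemma eqO_sym x y : eqO x y -> eqO y x.
Proof. by move=> xy n; case: (xy n) => x1 x2; split; apply: esym. Qed.

Lemma eqO_trans x y z : eqO x y -> eqO y z -> eqO x z.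
Proof.
move=> xy yz n; case: (xy n) (yz n) => x1 x2 [y1 y2].
by split; [exact: etrans x1 y1 | exact: etrans x2 y2].
Qed.

Lemma isO_const a b : isO (constO a b).
Proof. by move=> n; split. Qed.

Lemma isO_add x y : isO x -> isO y -> isO (addO x y).
Proof.
move=> xO yO n; have [x1 x2] := xO n; have [y1 y2] := yO n.
by split; apply/eqP; rewrite eqz_mod_dvd /= opprD addrACA rpredD // -eqz_mod_dvd; apply/eqP.
Qed.

Lemma isO_opp x : isO x -> isO (oppO x).
Proof.
move=> xO n; have [x1 x2] := xO n.
by split; apply/eqP; rewrite eqz_mod_dvd /= -opprD rpredN -eqz_mod_dvd; apply/eqP.
Qed.

Lemma isO_sub x y : isO x -> isO y -> isO (subO x y).
Proof. by move=> xO yO; apply: isO_add => //; apply: isO_opp. Qed.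

Lemma isO_digit c : isO (digitO c). Proof. by case: c; apply: isO_const. Qed.

Lemma isO_exp K x k : isO x -> isO (expO K x k).
Proof. by move=> xO; elim: k => [|k IH]; [apply: isO_const | apply: isO_mul]. Qed.

Lemma isO_cO K (z : zsqrt K) : isO (cO z). Proof. exact: isO_const. Qed.

Section Units.
Variable K : ramK.
Implicit Types (x y v X : Oseq) (z : zsqrt K).

Lemma zsqrt_intr_lreg (c : int) : c != 0 -> GRing.lreg (c%:~R : zsqrt K).
Proof.
move=> c_neq0 [a b] [a' b']; rewrite !zsqrt_intrM => -[/(mulfI c_neq0) -> /(mulfI c_neq0) ->].
by [].
Qed.

Lemma dvd2_exp_sub1 n z k : dvd2 n (z - 1) -> dvd2 n (z ^+ k - 1).
Proof.
move=> z1; elim: k => [|k IH]; first by rewrite subrr dvd2n0.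
have -> : z ^+ k.+1 - 1 = z * (z ^+ k - 1) + (z - 1) by rewrite exprS; ring.
by rewrite dvd2D ?dvd2Ml.
Qed.

Definition invO x : Oseq := fun n =>
  conjz (lev K x n) * (normz (lev K x n) ^+ (2 ^ n).-1)%:~R.

Lemma invO_spec x n :
  ~~ (2 %| normz (lev K x n))%Z -> dvd2 n (lev K x n * lev K (invO x) n - 1).
Proof.
move=> xn_odd; rewrite /lev /invO mulrA mul_conjz -intrM -exprS prednK ?expn_gt0 //.
rewrite -[1 : zsqrt K]/(1%:~R) -intrB zsqrt_intrE /dvd2 dvdz0 andbT.
exact: dvdz_trans (dvdz_exp2l 2 (leqnSn n)) (odd_exp2_congr1 n xn_odd).
Qed.

Lemma isO_inverse x v : isO x -> (forall n, dvd2 n (lev K x n * lev K v n - 1)) -> isO v.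
Proof.
move=> /(isOE K) xO xv; apply/(isOE K) => n.
set x' := lev K x n.+1; set x0 := lev K x n; set v' := lev K v n.+1; set v0 := lev K v n.
have -> : v' - v0 = - (v' * (x0 * v0 - 1)) + v0 * (- (x' - x0) * v' + (x' * v' - 1))
  by ring.
apply: dvd2D; first by rewrite dvd2N ?dvd2Ml.
apply/dvd2Ml/dvd2D; first by rewrite dvd2Mr ?dvd2N.
exact: dvd2_leq (xv n.+1).
Qed.

Lemma unitO_odd_normz x : isO x -> (forall n, ~~ (2 %| normz (lev K x n))%Z) -> unitO K x.
Proof.
move=> xO x_odd; have xv n := invO_spec (x_odd n).
split=> //; exists (invO x); split; first exact: isO_inverse xO xv.
by apply/(eqOE K) => n; rewrite levE; apply: xv.
Qed.

End Units.

Definition piz K : zsqrt K :=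
  match K with Q2sqrtm1 | Q2sqrtm5 => (1, 1) | _ => (0, 1) end.

(* [normz (piz K) = 2 * tpi K] with [tpi K] odd, because [K] is ramified. *)
Definition tpi K : int :=
  match K with
  | Q2sqrt2 => -1 | Q2sqrtm2 => 1 | Q2sqrt10 => -5 | Q2sqrtm10 => 5
  | Q2sqrtm1 => 1 | Q2sqrtm5 => 3
  end.

Section Uniformizer.
Variable K : ramK.
Implicit Types (x y X : Oseq) (z : zsqrt K).
Local Notation piz := (piz K).
Local Notation tpi := (tpi K).

Lemma normz_pi : normz piz = 2 * tpi. Proof. by case: K; vm_compute. Qed.
Lemma tpi_odd : ~~ (2 %| tpi)%Z. Proof. by case: K. Qed.
Lemma lev_pi n : lev K (piO K) n = piz. Proof. by case: K. Qed.
Lemma isO_pi : isO (piO K). Proof. by case: K; apply: isO_const. Qed.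

Lemma conjz_pi_mul_pi k : conjz piz ^+ k * piz ^+ k = (2 ^+ k * tpi ^+ k)%:~R.
Proof. by rewrite -exprMn mulrC mul_conjz normz_pi -exprMn rmorphXn. Qed.

Lemma tpiX_odd k : ~~ (2 %| tpi ^+ k)%Z.
Proof. by rewrite dvdzE abszX Euclid_dvdX // negb_and -dvdzE tpi_odd. Qed.

Definition tinvO : Oseq := locked (invO K (constO tpi 0)).

Lemma tinvO_spec n : dvd2 n (tpi%:~R * lev K tinvO n - 1).
Proof.
rewrite /tinvO -lock zsqrt_intrE; apply: invO_spec.
by rewrite /lev /= -(zsqrt_intrE K) normz_intr tpiX_odd.
Qed.

Lemma isO_tinvO : isO tinvO.
Proof.
rewrite /tinvO -lock; apply: (isO_inverse (isO_const tpi 0)) => n.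
by have := tinvO_spec n; rewrite /tinvO -lock zsqrt_intrE; apply.
Qed.

(* [pi_dvd s z]: [piz ^+ s] divides [z] in [O], since [conjz piz ^+ s * piz ^+ s]
   is [2 ^+ s] times the unit [tpi ^+ s]. *)
Definition pi_dvd s z := dvd2 s (conjz piz ^+ s * z).

Definition divz2X s z : zsqrt K := ((z.1 %/ 2 ^+ s)%Z, (z.2 %/ 2 ^+ s)%Z).

Lemma divz2XK s z : dvd2 s z -> (2 ^+ s)%:~R * divz2X s z = z.
Proof.
case/andP=> z1 z2; rewrite zsqrt_intrM /divz2X /= ![2 ^+ s * _]mulrC !divzK //.
by case: z z1 z2.
Qed.

(* The level [n] of [X / pi ^ s] needs the level [n + s] of [X]. *)
Definition pi_quot s X : Oseq := fun n => divz2X s (conjz piz ^+ s * lev K X (n + s)).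
Definition divpiO s X : Oseq := locked (mulO K (expO K tinvO s) (pi_quot s X)).

Lemma normz_add_pi (z y : zsqrt K) : (2 %| normz (z + piz * y) - normz z)%Z.
Proof.
rewrite normzD normzM normz_pi; set c := (_ * _ - _).
have -> : normz z + 2 * tpi * normz y + 2 * c - normz z = 2 * (tpi * normz y + c) by ring.
exact: dvdz_mulr.
Qed.

Lemma normz_odd_1pi (y : zsqrt K) : ~~ (2 %| normz (1 + piz * y))%Z.
Proof.
have := normz_add_pi 1 y; have -> : normz (1 : zsqrt K) = 1 by rewrite /normz /=; ring.
by move: (normz _) => a; lia.
Qed.

Lemma pi_dvd1_even_normz z : (2 %| normz z)%Z -> pi_dvd 1 z.
Proof.
have sq_par (a : int) : (2 %| a * a - a)%Z.
  have : (2 %| a)%Z \/ (2 %| a - 1)%Z by lia.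
  have -> : a * a - a = a * (a - 1) by ring.
  by case=> [a2|a1]; [apply: dvdz_mulr | apply: dvdz_mull].
case: z => a b; rewrite /pi_dvd expr1 zsqrt_mulE /dvd2 /normz /= !expr2 expr1.
have := sq_par a; have := sq_par b.
by case: K => /=; move: (a * a) (b * b) => A B hB hA h; apply/andP; split; lia.
Qed.

Section DivPi.
Variables (s : nat) (X : Oseq).
Hypotheses (XO : isO X) (X_pi_dvd : forall n, pi_dvd s (lev K X (n + s))).

Let Q := pi_quot s X.
Let QE n : (2 ^+ s)%:~R * lev K Q n = conjz piz ^+ s * lev K X (n + s).
Proof. exact: divz2XK (X_pi_dvd n). Qed.

Lemma isO_divpiO : isO (divpiO s X).
Proof.
rewrite /divpiO -lock.
apply: isO_mul; first exact/isO_exp/isO_tinvO.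
apply/(isOE K) => n; rewrite -(dvd2_mul2l s) mulrBr !QE -mulrBr dvd2Ml //.
by rewrite addSn addnC; apply: (isOE K X).1.
Qed.

Lemma divpiOK : eqO X (mulO K (expO K (piO K) s) (divpiO s X)).
Proof.
rewrite /divpiO -lock.
apply/(eqOE K) => n; rewrite !levE lev_pi.
have piQ : piz ^+ s * lev K Q n = (tpi ^+ s)%:~R * lev K X (n + s).
  apply: (@zsqrt_intr_lreg K (2 ^+ s)); first by rewrite expf_neq0.
  by rewrite mulrCA QE mulrA [piz ^+ s * _]mulrC conjz_pi_mul_pi mulrA -intrM.
rewrite mulrCA piQ rmorphXn mulrA -exprMn.
set a := lev K tinvO n * tpi%:~R.
have -> : lev K X n - a ^+ s * lev K X (n + s) =
  - (lev K X (n + s) - lev K X n) - (a ^+ s - 1) * lev K X (n + s) by ring.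
rewrite dvd2B ?dvd2N ?isO_dvd2 ?leq_addr // dvd2Mr // dvd2_exp_sub1 //.
by rewrite /a mulrC tinvO_spec.
Qed.

End DivPi.
End Uniformizer.

Section PiAdicDigits.
Variable K : ramK.
Implicit Types (x y : Oseq) (c : nat -> bool).
Local Notation piz := (piz K).
Local Notation pi := (piO K).

(* [x] is [1] modulo [pi] if its norm is odd, and [0] modulo [pi] otherwise. *)
Definition bitO x : bool := ~~ (2 %| normz (lev K x 1))%Z.
Definition stepO x : Oseq := divpiO K 1 (subO x (digitO (bitO x))).

Lemma stepO_spec x : isO x ->
  isO (stepO x) /\ eqO x (addO (digitO (bitO x)) (mulO K pi (stepO x))).
Proof.
move=> xO; set X := subO x (digitO (bitO x)).
have XO : isO X by apply: isO_sub xO (isO_digit _).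
have X_pi_dvd n : pi_dvd 1 (lev K X (n + 1)).
  apply: pi_dvd1_even_normz; rewrite lev_sub lev_digit.
  have := normz_congr2 (isO_dvd2 K xO (leq_addl n 1)); rewrite /bitO.
  case: (boolP (2 %| normz (lev K x 1))%Z) => /= [x1_even|x1_odd].
    by rewrite subr0; move: x1_even; move: (normz _) (normz _) => a b; lia.
  have N1 : normz (- 1 : zsqrt K) = 1 by rewrite /normz /=; ring.
  rewrite normzD N1; move: x1_odd; move: (normz _) (normz _) (_ * _ - _) => a b e; lia.
have [SO XS] := conj (isO_divpiO XO X_pi_dvd) (divpiOK XO X_pi_dvd).
split=> //; apply/(eqOE K) => n; move/(eqOE K): XS => /(_ n).
by rewrite !levE expr1 opprD addrA.
Qed.

Lemma lev_psumO c N n : lev K (psumO K c N) n = \sum_(0 <= k < N) (c k)%:R * piz ^+ k.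
Proof.
rewrite /psumO /index_iota subn0; elim: (iota 0 N) => [|k s IH]; first by rewrite big_nil.
by rewrite big_cons -IH /= lev_add lev_mul lev_exp lev_digit lev_pi.
Qed.

Lemma lev_psumO_shift c c' N n : (forall k, c' k.+1 = c k) ->
  lev K (psumO K c' N.+1) n = (c' 0%N)%:R + piz * lev K (psumO K c N) n.
Proof.
move=> c'c; rewrite !lev_psumO big_nat_recl // expr0 mulr1 mulr_sumr.
by congr (_ + _); apply: eq_bigr => k _; rewrite c'c exprS mulrCA.
Qed.

Lemma ord_ge0 x : isO x -> ord_ge K x 0.
Proof. by move=> xO; exists x; split=> //; apply: (eqO_lev K) => n; rewrite !levE mul1r. Qed.

Lemma ord_ge_eqO x x' k : eqO x x' -> ord_ge K x k -> ord_ge K x' k.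
Proof. by move=> xx' [y [yO xy]]; exists y; split=> //; apply: eqO_trans (eqO_sym xx') xy. Qed.

Definition pi_expansion x c := forall N, ord_ge K (subO x (psumO K c N)) N.

Lemma ord_ge_shift x x' c c' N : (forall k, c' k.+1 = c k) ->
  eqO x (addO (digitO (c' 0%N)) (mulO K pi x')) ->
  ord_ge K (subO x' (psumO K c N)) N -> ord_ge K (subO x (psumO K c' N.+1)) N.+1.
Proof.
move=> c'c xx' [y [yO x'y]]; exists y; split=> //; apply/(eqOE K) => n.
move/(eqOE K): xx' => /(_ n) xx'n; move/(eqOE K): x'y => /(_ n) x'yn.
rewrite !levE lev_pi in xx'n x'yn.
rewrite lev_sub (lev_psumO_shift _ _ c'c) !levE lev_pi exprS.
set P := lev K (psumO K c N) n.
have -> : lev K x n - ((c' 0%N)%:R + piz * P) - piz * piz ^+ N * lev K y n =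
  lev K x n - ((c' 0%N)%:R + piz * lev K x' n) + piz * (lev K x' n - P - piz ^+ N * lev K y n)
  by ring.
by rewrite dvd2D ?dvd2Ml.
Qed.

Lemma pi_expansion_shift x x' c c' : isO x -> (forall k, c' k.+1 = c k) ->
  eqO x (addO (digitO (c' 0%N)) (mulO K pi x')) -> pi_expansion x' c -> pi_expansion x c'.
Proof.
move=> xO c'c xx' x'c [|N]; last exact: ord_ge_shift c'c xx' (x'c N).
by apply/ord_ge0/isO_sub => //; apply: isO_const.
Qed.

Fixpoint digitsO x k : bool := if k is k'.+1 then digitsO (stepO x) k' else bitO x.

Lemma pi_expansion_digitsO x : isO x -> pi_expansion x (digitsO x).
Proof.
move=> xO N; elim: N x xO => [|N IH] x xO.
  by apply/ord_ge0/isO_sub => //; apply: isO_const.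
have [sO xs] := stepO_spec xO.
exact: ord_ge_shift (fun k => erefl) xs (IH _ sO).
Qed.

Lemma pi_coeff_1pi w y e : isO w -> isO y ->
  eqO w (addO oneO (mulO K pi (addO (digitO e) (mulO K pi y)))) -> pi_coeff K w e.
Proof.
move=> wO yO wy; set c := fun k => if k is k'.+1 then digitsO y k' else e.
have w1O : isO (addO (digitO e) (mulO K pi y)).
  by apply: isO_add; [apply: isO_digit | apply: isO_mul => //; apply: isO_pi].
have w1c : pi_expansion (addO (digitO e) (mulO K pi y)) c.
  apply: (pi_expansion_shift w1O (fun k => erefl) _ (pi_expansion_digitsO yO)).
  by apply: (eqO_lev K) => n.
set c' := fun k => if k is k'.+1 then c k' else true.
by exists c'; split=> //; split=> //; apply: (pi_expansion_shift (c' := c') wO _ wy w1c).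
Qed.

Definition digits4 (e : bool) (t : bool * bool) : zsqrt K :=
  1 + e%:R * piz + t.1%:R * piz ^+ 2 + t.2%:R * piz ^+ 3.

Lemma pi_coeff_ord_ge4 u e : pi_coeff K u e ->
  exists t, ord_ge K (subO u (cO (digits4 e t))) 4.
Proof.
case=> c [c0 [c1 uc]]; exists (c 2%N, c 3%N); apply: ord_ge_eqO (uc 4%N).
apply: (eqO_lev K) => n; rewrite !lev_sub lev_psumO lev_cO /index_iota /=.
by rewrite !big_cons big_nil c0 c1 expr0 expr1 mulr1 addr0 !addrA.
Qed.

End PiAdicDigits.

Lemma not_ord_ge_odd_normz K x k w :
  (forall n, ~~ (2 %| normz (lev K w n))%Z) ->
  eqO x (mulO K (expO K (piO K) k) w) -> ~ ord_ge K x k.+1.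
Proof.
move=> w_odd xw [y [yO xy]].
have := (eqOE K _ _).1 (eqO_trans (eqO_sym xw) xy) k.+1; rewrite !levE !lev_pi.
set W := lev K w k.+1; set Y := lev K y k.+1 => xk.
have /dvd2_normz : dvd2 1 (W - piz K * Y).
  rewrite -(dvd2_odd_intrM _ (tpiX_odd K k)) -(dvd2_mul2l k) mulrA -intrM.
  rewrite -conjz_pi_mul_pi -mulrA addn1 dvd2Ml //.
  by rewrite mulrBr mulrA -exprSr.
have := normz_add_pi W (- Y); rewrite mulrN.
by move: (w_odd k.+1); rewrite -/W; move: (normz _) (normz _) => a b; lia.
Qed.

Definition bunits K : seq (zsqrt K) :=
  match K with Q2sqrtm1 | Q2sqrtm5 => [:: (1, 0); (0, 1)] | _ => [:: (1, 0); (1, 1)] end.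

Section BinaryForm.
Variables (K : ramK) (m r : nat).
Hypothesis m_odd : odd m.
Implicit Types (b z P : zsqrt K).
Local Notation piz := (piz K).
Local Notation pi := (piO K).

Lemma bunits_spec b : b \in bunits K -> dvd2 2 (b ^+ 4 - 1) && ~~ (2 %| normz b)%Z.
Proof. by case: K b => b; rewrite !inE => /orP[] /eqP ->; vm_compute. Qed.

Lemma unitO_bunits b : b \in bunits K -> unitO K (cO b).
Proof.
case/bunits_spec/andP=> _ b_odd.
by apply: unitO_odd_normz; [apply: isO_cO | move=> n; rewrite lev_cO].
Qed.

Lemma dvd2_expD2_sq b : dvd2 2 (b ^+ 4 - 1) -> dvd2 2 (b ^+ (2 * m) - b ^+ 2).
Proof.
move=> b4; have -> : (2 * m = 2 + 4 * m./2)%N.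
  by rewrite -{1}(odd_double_half m) m_odd -muln2; lia.
rewrite exprD exprM -[X in _ - X]mulr1 -mulrBr.
by rewrite dvd2Ml // dvd2_exp_sub1.
Qed.

Lemma dvd2_pi4 : dvd2 2 (piz ^+ 4). Proof. by case: K; vm_compute. Qed.

Lemma dvd2_mul_bunits U P b : b \in bunits K -> dvd2 2 (U - P) ->
  dvd2 2 (U * b ^+ (2 * m) - P * b ^+ 2).
Proof.
case/bunits_spec/andP=> b4 _ UP.
have -> : U * b ^+ (2 * m) - P * b ^+ 2 = (U - P) * b ^+ (2 * m) + P * (b ^+ (2 * m) - b ^+ 2).
  by ring.
by apply: dvd2D; [apply: dvd2Mr | apply/dvd2Ml/dvd2_expD2_sq].
Qed.

Lemma pi_dvd_four s : (s <= 4)%N -> pi_dvd s ((2 ^+ 2)%:~R : zsqrt K).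
Proof. by case: s => [|[|[|[|[|s]]]]] //; case: K; vm_compute. Qed.

Lemma pi_dvd_mod4 s (x y : zsqrt K) : (s <= 4)%N -> dvd2 2 (x - y) -> pi_dvd s y -> pi_dvd s x.
Proof.
move=> s4 /divz2XK xy y_dvd; rewrite /pi_dvd -(subrK y x) -xy mulrDr.
by rewrite dvd2D // mulrA dvd2Mr //; apply: pi_dvd_four.
Qed.

Definition pi_good k j T P1 P2 b1 b2 : bool :=
  pi_dvd (k + j) (P1 * b1 ^+ 2 + P2 * b2 ^+ 2 - piz ^+ k * T).

Lemma binform_pi_good k j T a1 a2 u1 u2 P1 P2 b1 b2 :
  (2 <= k + j <= 4)%N -> b1 \in bunits K -> b2 \in bunits K -> isO u1 -> isO u2 ->
  eqO a1 (mulO K (expO K pi r) u1) -> eqO a2 (mulO K (expO K pi r) u2) ->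
  ord_ge K (subO u1 (cO P1)) 4 -> ord_ge K (subO u2 (cO P2)) 4 ->
  pi_good k j T P1 P2 b1 b2 ->
  exists y, isO y /\ eqO (binform K (2 * m) a1 (cO b1) a2 (cO b2))
    (mulO K (expO K pi (r + k)) (addO (cO T) (mulO K (expO K pi j) y))).
Proof.
move=> /andP[s2 s4] b1_in b2_in u1O u2O au1 au2 [Y1 [Y1O uY1]] [Y2 [Y2O uY2]] good.
set s := (k + j)%N in s2 s4 good.
set B1 := b1 ^+ (2 * m); set B2 := b2 ^+ (2 * m).
set X := subO (addO (mulO K u1 (cO B1)) (mulO K u2 (cO B2))) (mulO K (expO K pi k) (cO T)).
have XO : isO X.
  apply: isO_sub; first by apply: isO_add; apply: isO_mul => //; apply: isO_cO.
  by apply: isO_mul; [apply/isO_exp/isO_pi | apply: isO_cO].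
have X_pi_dvd n : pi_dvd s (lev K X (n + s)).
  have uP u P Y : eqO (subO u (cO P)) (mulO K (expO K pi 4) Y) ->
      dvd2 2 (lev K u (n + s) - P).
    move/(eqOE K)/(_ (n + s)%N)/(dvd2_leq (leq_trans s2 (leq_addl n s))).
    rewrite !levE lev_pi => uPY.
    rewrite -(subrK (piz ^+ 4 * lev K Y (n + s)) (lev K u _ - P)).
    by rewrite dvd2D // dvd2Mr // dvd2_pi4.
  apply: pi_dvd_mod4 s4 _ good; rewrite /X !levE lev_pi.
  set U1 := lev K u1 _; set U2 := lev K u2 _.
  have -> : U1 * B1 + U2 * B2 - piz ^+ k * T - (P1 * b1 ^+ 2 + P2 * b2 ^+ 2 - piz ^+ k * T) =
    (U1 * B1 - P1 * b1 ^+ 2) + (U2 * B2 - P2 * b2 ^+ 2) by ring.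
  by apply: dvd2D; apply: dvd2_mul_bunits => //; [apply: uP uY1 | apply: uP uY2].
have [yO Xy] := conj (isO_divpiO XO X_pi_dvd) (divpiOK XO X_pi_dvd).
exists (divpiO K s X); split=> //; apply/(eqOE K) => n.
move/(eqOE K)/(_ n): au1; move/(eqOE K)/(_ n): au2; move/(eqOE K)/(_ n): Xy.
rewrite /binform /X !levE !lev_pi => Xyn au2n au1n.
set y := lev K (divpiO K s X) n.
have -> : lev K a1 n * B1 + lev K a2 n * B2 - piz ^+ (r + k) * (T + piz ^+ j * y) =
   (lev K a1 n - piz ^+ r * lev K u1 n) * B1 + (lev K a2 n - piz ^+ r * lev K u2 n) * B2
   + piz ^+ r * (lev K u1 n * B1 + lev K u2 n * B2 - piz ^+ k * T - piz ^+ s * y)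
  by rewrite /s !exprD; ring.
by apply: dvd2D; [apply: dvd2D; apply: dvd2Mr | apply: dvd2Ml].
Qed.

End BinaryForm.

Definition good_pair K k j (T P1 P2 : zsqrt K) : bool :=
  has (fun b => pi_good k j T P1 P2 b.1 b.2) [seq (b1, b2) | b1 <- bunits K, b2 <- bunits K].

(* Explicit enumerations: [enum] of a finType does not reduce under [vm_compute]. *)
Definition bools := [:: true; false].
Definition bool_pairs := [seq (x, y) | x <- bools, y <- bools].

Lemma mem_bools b : b \in bools. Proof. by case: b. Qed.
Lemma mem_bool_pairs t : t \in bool_pairs. Proof. by case: t => [[] []]. Qed.

Lemma good_pair_distinct_coeffs K c (e : bool) t1 t2 :
  good_pair 1 2 (1 + e%:R * piz K) (digits4 K c t1) (digits4 K (~~ c) t2).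
Proof.
have : all (fun c => all (fun e : bool => all (fun t1 => all (fun t2 =>
    good_pair 1 2 (1 + e%:R * piz K) (digits4 K c t1) (digits4 K (~~ c) t2))
    bool_pairs) bool_pairs) bools) bools by case: K; vm_compute.
move=> /allP/(_ c (mem_bools c))/allP/(_ e (mem_bools e))/allP/(_ t1 (mem_bool_pairs t1)).
by move=> /allP/(_ t2 (mem_bool_pairs t2)).
Qed.

Lemma good_pair_same_coeff K c t1 t2 : good_pair 2 1 1 (digits4 K c t1) (digits4 K c t2).
Proof.
have : all (fun c => all (fun t1 => all (fun t2 =>
    good_pair 2 1 1 (digits4 K c t1) (digits4 K c t2)) bool_pairs) bool_pairs) bools
  by case: K; vm_compute.
move=> /allP/(_ c (mem_bools c))/allP/(_ t1 (mem_bool_pairs t1)).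
by move=> /allP/(_ t2 (mem_bool_pairs t2)).
Qed.

Lemma good_pair_same_coeff3 K c t1 t2 : good_pair 3 0 0 (digits4 K c t1) (digits4 K c t2).
Proof.
have : all (fun c => all (fun t1 => all (fun t2 =>
    good_pair 3 0 0 (digits4 K c t1) (digits4 K c t2)) bool_pairs) bool_pairs) bools
  by case: K; vm_compute.
move=> /allP/(_ c (mem_bools c))/allP/(_ t1 (mem_bool_pairs t1)).
by move=> /allP/(_ t2 (mem_bool_pairs t2)).
Qed.

Definition good3 K k j (T : zsqrt K) c t1 t2 t3 : bool :=
  let good t t' := good_pair k j T (digits4 K c t) (digits4 K c t') in
  [|| good t1 t2, good t1 t3 | good t2 t3].

Lemma good3_imag K c t1 t2 t3 : K = Q2sqrtm1 \/ K = Q2sqrtm5 -> good3 4 0 (0 : zsqrt K) c t1 t2 t3.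
Proof.
move=> K_imag; have : all (fun c => all (fun t1 => all (fun t2 => all (fun t3 =>
    good3 4 0 (0 : zsqrt K) c t1 t2 t3) bool_pairs) bool_pairs) bool_pairs) bools.
  by case: K_imag => ->; vm_compute.
move=> /allP/(_ c (mem_bools c))/allP/(_ t1 (mem_bool_pairs t1)).
by move=> /allP/(_ t2 (mem_bool_pairs t2))/allP/(_ t3 (mem_bool_pairs t3)).
Qed.

Lemma good3_real K (c : bool) t1 t2 t3 :
  K = Q2sqrt2 \/ K = Q2sqrt10 \/ K = Q2sqrtm2 \/ K = Q2sqrtm10 ->
  good3 2 2 (1 + c%:R * piz K) c t1 t2 t3.
Proof.
move=> K_real; have : all (fun c : bool => all (fun t1 => all (fun t2 => all (fun t3 =>
    good3 2 2 (1 + c%:R * piz K) c t1 t2 t3) bool_pairs) bool_pairs) bool_pairs) bools.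
  by case: K_real => [|[|[|]]] ->; vm_compute.
move=> /allP/(_ c (mem_bools c))/allP/(_ t1 (mem_bool_pairs t1)).
by move=> /allP/(_ t2 (mem_bool_pairs t2))/allP/(_ t3 (mem_bool_pairs t3)).
Qed.

Section Parts.
Variables (K : ramK) (m r : nat).
Hypothesis m_odd : odd m.
Local Notation pi := (piO K).
Local Notation d := (2 * m)%N.
Implicit Types (T P : zsqrt K).

Lemma isO_const_add_piX T j y : isO y -> isO (addO (cO T) (mulO K (expO K pi j) y)).
Proof.
by move=> yO; apply: isO_add; [apply: isO_cO | apply: isO_mul => //; apply/isO_exp/isO_pi].
Qed.

Lemma unitO_pi_coeff_1pi (e : bool) y : isO y ->
  let w := addO (cO (1 + e%:R * piz K)) (mulO K (expO K pi 2) y) in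
  unitO K w /\ pi_coeff K w e.
Proof.
move=> yO w; have wO : isO w by apply: isO_const_add_piX.
set w1 := addO (digitO e) (mulO K pi y).
have wE n : lev K w n = lev K (addO oneO (mulO K pi w1)) n.
  by rewrite /w1 !levE !lev_pi; ring.
split; first by apply: unitO_odd_normz => // n; rewrite wE !levE lev_pi normz_odd_1pi.
exact: pi_coeff_1pi wO yO (eqO_lev K wE).
Qed.

Lemma binform_good_pair k j T a1 a2 u1 u2 P1 P2 :
  (2 <= k + j <= 4)%N -> isO u1 -> isO u2 ->
  eqO a1 (mulO K (expO K pi r) u1) -> eqO a2 (mulO K (expO K pi r) u2) ->
  ord_ge K (subO u1 (cO P1)) 4 -> ord_ge K (subO u2 (cO P2)) 4 ->
  good_pair k j T P1 P2 ->
  exists b1 b2 y, [/\ unitO K b1, unitO K b2, isO y &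
    eqO (binform K d a1 b1 a2 b2)
        (mulO K (expO K pi (r + k)) (addO (cO T) (mulO K (expO K pi j) y)))].
Proof.
move=> kj u1O u2O au1 au2 uP1 uP2 /hasP[[b1 b2] /allpairsP[[x y] [/= bx byy [-> ->]]] good].
have [w [wO E]] := binform_pi_good m_odd kj bx byy u1O u2O au1 au2 uP1 uP2 good.
by exists (cO x), (cO y), w; split=> //; apply: unitO_bunits.
Qed.

Lemma binform_distinct_coeffs a1 a2 u1 u2 c1 c2 : c1 != c2 -> isO u1 -> isO u2 ->
  eqO a1 (mulO K (expO K pi r) u1) -> eqO a2 (mulO K (expO K pi r) u2) ->
  pi_coeff K u1 c1 -> pi_coeff K u2 c2 ->
  forall e : bool, exists b1 b2 w, unitO K b1 /\ unitO K b2 /\ unitO K w /\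
    pi_coeff K w e /\ eqO (binform K d a1 b1 a2 b2) (mulO K (expO K pi r.+1) w).
Proof.
move=> c12 u1O u2O au1 au2 /pi_coeff_ord_ge4[t1 uP1] /pi_coeff_ord_ge4[t2 uP2] e.
have good := good_pair_distinct_coeffs K c1 e t1 t2.
have c2E : ~~ c1 = c2 by case: c1 c2 c12 {uP1 uP2 good} => -[].
rewrite c2E in good.
have [b1 [b2 [y [b1U b2U yO E]]]] :=
  binform_good_pair (isT : (2 <= 1 + 2 <= 4)%N) u1O u2O au1 au2 uP1 uP2 good.
have [wU we] := unitO_pi_coeff_1pi e yO.
by rewrite addn1 in E; exists b1, b2, (addO (cO (1 + e%:R * piz K)) (mulO K (expO K pi 2) y)).
Qed.

Lemma binform_same_coeff_ord_eq a1 a2 u1 u2 c : isO u1 -> isO u2 ->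
  eqO a1 (mulO K (expO K pi r) u1) -> eqO a2 (mulO K (expO K pi r) u2) ->
  pi_coeff K u1 c -> pi_coeff K u2 c ->
  exists b1 b2, unitO K b1 /\ unitO K b2 /\ ord_eq K (binform K d a1 b1 a2 b2) (r + 2).
Proof.
move=> u1O u2O au1 au2 /pi_coeff_ord_ge4[t1 uP1] /pi_coeff_ord_ge4[t2 uP2].
have [b1 [b2 [y [b1U b2U yO E]]]] := binform_good_pair (isT : (2 <= 2 + 1 <= 4)%N)
  u1O u2O au1 au2 uP1 uP2 (good_pair_same_coeff K c t1 t2).
exists b1, b2; do !split=> //.
  by exists (addO (cO (1 : zsqrt K)) (mulO K (expO K pi 1) y)); split=> //; apply: isO_const_add_piX.
by apply: (not_ord_ge_odd_normz _ E) => n; rewrite !levE lev_pi expr1 normz_odd_1pi.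
Qed.

Lemma binform_same_coeff_ord_ge3 a1 a2 u1 u2 c : isO u1 -> isO u2 ->
  eqO a1 (mulO K (expO K pi r) u1) -> eqO a2 (mulO K (expO K pi r) u2) ->
  pi_coeff K u1 c -> pi_coeff K u2 c ->
  exists b1 b2, unitO K b1 /\ unitO K b2 /\ ord_ge K (binform K d a1 b1 a2 b2) (r + 3).
Proof.
move=> u1O u2O au1 au2 /pi_coeff_ord_ge4[t1 uP1] /pi_coeff_ord_ge4[t2 uP2].
have [b1 [b2 [y [b1U b2U yO E]]]] := binform_good_pair (isT : (2 <= 3 + 0 <= 4)%N)
  u1O u2O au1 au2 uP1 uP2 (good_pair_same_coeff3 K c t1 t2).
exists b1, b2; do !split=> //.
by exists (addO (cO (0 : zsqrt K)) (mulO K (expO K pi 0) y)); split=> //; apply: isO_const_add_piX.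
Qed.

Section ThreeForms.
Variables (a u : 'I_3 -> Oseq) (c : bool).
Hypotheses (uO : forall i, isO (u i)) (au : forall i, eqO (a i) (mulO K (expO K pi r) (u i))).
Hypothesis uc : forall i, pi_coeff K (u i) c.

Let digits : exists t, forall i, ord_ge K (subO (u i) (cO (digits4 K c (t i)))) 4.
Proof. exact: fin_all_exists (fun i => pi_coeff_ord_ge4 (uc i)). Qed.

Lemma binform_three_imag : K = Q2sqrtm1 \/ K = Q2sqrtm5 ->
  exists (i j : 'I_3) (bi bj : Oseq), i != j /\ unitO K bi /\ unitO K bj /\
    ord_ge K (binform K d (a i) bi (a j) bj) (r + 4).
Proof.
move=> K_imag; have [t uP] := digits.
suff pair i j : i != j -> good_pair 4 0 0 (digits4 K c (t i)) (digits4 K c (t j)) ->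
  exists (i j : 'I_3) (bi bj : Oseq), i != j /\ unitO K bi /\ unitO K bj /\
    ord_ge K (binform K d (a i) bi (a j) bj) (r + 4).
  by case/or3P: (good3_imag c (t 0) (t 1) (t 2) K_imag); apply: pair.
move=> ij good; have [b1 [b2 [y [b1U b2U yO E]]]] := binform_good_pair
  (isT : (2 <= 4 + 0 <= 4)%N) (uO i) (uO j) (au i) (au j) (uP i) (uP j) good.
exists i, j, b1, b2; do !split=> //.
by exists (addO (cO (0 : zsqrt K)) (mulO K (expO K pi 0) y)); split=> //; apply: isO_const_add_piX.
Qed.

Lemma binform_three_real : K = Q2sqrt2 \/ K = Q2sqrt10 \/ K = Q2sqrtm2 \/ K = Q2sqrtm10 ->
  exists (i j : 'I_3) (bi bj w : Oseq), i != j /\ unitO K bi /\ unitO K bj /\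
    unitO K w /\ pi_coeff K w c /\
    eqO (binform K d (a i) bi (a j) bj) (mulO K (expO K pi (r + 2)) w).
Proof.
move=> K_real; have [t uP] := digits.
suff pair i j : i != j ->
    good_pair 2 2 (1 + c%:R * piz K) (digits4 K c (t i)) (digits4 K c (t j)) ->
  exists (i j : 'I_3) (bi bj w : Oseq), i != j /\ unitO K bi /\ unitO K bj /\
    unitO K w /\ pi_coeff K w c /\
    eqO (binform K d (a i) bi (a j) bj) (mulO K (expO K pi (r + 2)) w).
  by case/or3P: (good3_real c (t 0) (t 1) (t 2) K_real); apply: pair.
move=> ij good; have [b1 [b2 [y [b1U b2U yO E]]]] := binform_good_pair
  (isT : (2 <= 2 + 2 <= 4)%N) (uO i) (uO j) (au i) (au j) (uP i) (uP j) good.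
have [wU wc] := unitO_pi_coeff_1pi c yO.
by exists i, j, b1, b2, (addO (cO (1 + c%:R * piz K)) (mulO K (expO K pi 2) y)).
Qed.

End ThreeForms.

End Parts.

Theorem lemma2 (K : ramK) (m r : nat) (Hodd : odd m) (Hm : (3 <= m)%N) :
  let d := (2 * m)%N in
  let pi := piO K in
  (* (1) *)
  (forall a1 a2 u1 u2 : Oseq,
      isO a1 -> isO a2 -> unitO K u1 -> unitO K u2 ->
      eqO a1 (mulO K (expO K pi r) u1) -> eqO a2 (mulO K (expO K pi r) u2) ->
      (exists c1 c2 : bool, pi_coeff K u1 c1 /\ pi_coeff K u2 c2 /\ c1 != c2) ->
      forall e : bool, exists b1 b2 w : Oseq,
        unitO K b1 /\ unitO K b2 /\ unitO K w /\ pi_coeff K w e /\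
        eqO (binform K d a1 b1 a2 b2) (mulO K (expO K pi r.+1) w)) /\
  (* (2) *)
  (forall a1 a2 u1 u2 : Oseq,
      isO a1 -> isO a2 -> unitO K u1 -> unitO K u2 ->
      eqO a1 (mulO K (expO K pi r) u1) -> eqO a2 (mulO K (expO K pi r) u2) ->
      (exists c : bool, pi_coeff K u1 c /\ pi_coeff K u2 c) ->
      exists b1 b2 : Oseq, unitO K b1 /\ unitO K b2 /\
        ord_eq K (binform K d a1 b1 a2 b2) (r + 2)) /\
  (* (3) *)
  (forall a1 a2 u1 u2 : Oseq,
      isO a1 -> isO a2 -> unitO K u1 -> unitO K u2 ->
      eqO a1 (mulO K (expO K pi r) u1) -> eqO a2 (mulO K (expO K pi r) u2) ->
      (exists c : bool, pi_coeff K u1 c /\ pi_coeff K u2 c) ->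
      exists b1 b2 : Oseq, unitO K b1 /\ unitO K b2 /\
        ord_ge K (binform K d a1 b1 a2 b2) (r + 3)) /\
  (* (4) *)
  ((K = Q2sqrtm1 \/ K = Q2sqrtm5) ->
   forall a u : 'I_3 -> Oseq,
      (forall i, isO (a i)) -> (forall i, unitO K (u i)) ->
      (forall i, eqO (a i) (mulO K (expO K pi r) (u i))) ->
      (exists c : bool, forall i, pi_coeff K (u i) c) ->
      exists (i j : 'I_3) (bi bj : Oseq), i != j /\ unitO K bi /\ unitO K bj /\
        ord_ge K (binform K d (a i) bi (a j) bj) (r + 4)) /\
  (* (5) *)
  ((K = Q2sqrt2 \/ K = Q2sqrt10 \/ K = Q2sqrtm2 \/ K = Q2sqrtm10) ->
   forall (a u : 'I_3 -> Oseq) (c : bool),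
      (forall i, isO (a i)) -> (forall i, unitO K (u i)) ->
      (forall i, eqO (a i) (mulO K (expO K pi r) (u i))) ->
      (forall i, pi_coeff K (u i) c) ->
      exists (i j : 'I_3) (bi bj w : Oseq), i != j /\ unitO K bi /\ unitO K bj /\
        unitO K w /\ pi_coeff K w c /\
        eqO (binform K d (a i) bi (a j) bj) (mulO K (expO K pi (r + 2)) w)).
Proof.
move=> d pi; split; [|split; [|split; [|split]]].
- move=> a1 a2 u1 u2 _ _ [u1O _] [u2O _] au1 au2 [c1 [c2 [u1c [u2c c12]]]].
  exact (binform_distinct_coeffs Hodd c12 u1O u2O au1 au2 u1c u2c).
- move=> a1 a2 u1 u2 _ _ [u1O _] [u2O _] au1 au2 [c [u1c u2c]].
  exact (binform_same_coeff_ord_eq Hodd u1O u2O au1 au2 u1c u2c).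
- move=> a1 a2 u1 u2 _ _ [u1O _] [u2O _] au1 au2 [c [u1c u2c]].
  exact (binform_same_coeff_ord_ge3 Hodd u1O u2O au1 au2 u1c u2c).
- move=> K_imag a u _ uU au [c uc].
  exact (binform_three_imag Hodd (fun i => (uU i).1) au uc K_imag).
- move=> K_real a u c _ uU au uc.
  exact (binform_three_real Hodd (fun i => (uU i).1) au uc K_real).
Qed.
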